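(* Let $\Gamma$ be a countably infinite group with a strictly decreasing sequence $\{\Gamma_n\}$ of finite-index normal subgroups with trivial intersection, $X=\varprojlim\Gamma/\Gamma_n$ with left translation action and quotient maps $\pi_n:X\to\Gamma/\Gamma_n$, and for $n\ge2$ let $\gamma_n\in\Gamma_{n-1}\setminus\Gamma_n$ and $C_n=\pi_n^{-1}(\gamma_n\Gamma_n)$. Let $s_1,s_2\in\Gamma$ and $x,y\in X$ with $s_1x\in C_{n_1}$, $s_2x\in C_{n_2}$ where $n_1<n_2$, and $s_1y\notin C_{n_1}$, $s_2y\in C_{m_2}$. Then $m_2\le n_1$.
   Context: $X=\varprojlim\Gamma/\Gamma_n$ is the compact group of compatible sequences in $\prod_n\Gamma/\Gamma_n$ containing $\Gamma$ as a subgroup; $\Gamma$ acts by left translation. All indices $n_1,n_2,m_2$ are $\ge2$. *)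

From Stdlib Require Import Arith List.

Record group := Group {
  gcar :> Type;
  gmul : gcar -> gcar -> gcar;
  gone : gcar;
  ginv : gcar -> gcar;
  gmulA : forall a b c, gmul a (gmul b c) = gmul (gmul a b) c;
  gmul1l : forall a, gmul gone a = a;
  gmulVl : forall a, gmul (ginv a) a = gone
}.

Arguments gmul {g}.
Arguments gone {g}.
Arguments ginv {g}.

Definition countably_infinite (G : group) : Prop :=
  exists f : nat -> G,
    (forall m n, f m = f n -> m = n) /\ (forall g, exists n, f n = g).

Definition is_subgroup {G : group} (H : G -> Prop) : Prop :=
  H gone /\ (forall a b, H a -> H b -> H (gmul a b)) /\ (forall a, H a -> H (ginv a)).

Definition is_normal {G : group} (H : G -> Prop) : Prop :=
  forall g h, H h -> H (gmul (gmul g h) (ginv g)).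

Definition finite_index {G : group} (H : G -> Prop) : Prop :=
  exists reps : list G, forall g, exists r, In r reps /\ H (gmul (ginv r) g).

Definition strict_subset {G : group} (K H : G -> Prop) : Prop :=
  (forall g, K g -> H g) /\ (exists g, H g /\ ~ K g).

Definition lcoset {G : group} (H : G -> Prop) (g : G) : G -> Prop :=
  fun h => H (gmul (ginv g) h).

(* X = inverse limit of G / Gam n (n >= 1): compatible sequences of cosets;
   the component at index 0 is irrelevant (the sequence is indexed from 1). *)
Definition inv_limit {G : group} (Gam : nat -> G -> Prop) : Type :=
  { c : nat -> G -> Prop |
      forall n, 1 <= n ->
        (exists g, c n = lcoset (Gam n) g) /\ (forall h, c (S n) h -> c n h) }.

Definition translate {G : group} (s : G) (c : nat -> G -> Prop) : nat -> G -> Prop :=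
  fun n h => c n (gmul (ginv s) h).

Definition in_C {G : group} (Gam : nat -> G -> Prop) (gam : nat -> G) (n : nat)
  (c : nat -> G -> Prop) : Prop :=
  c n = lcoset (Gam n) (gam n).

From Stdlib Require Import Arith Lia FunctionalExtensionality PropExtensionality.

(* If m2 > n1, then gam n2 and gam m2 both lie in Gam n1, so the level-n1
   components of s2 x and s2 y are both the trivial coset Gam n1.  Hence x and
   y agree at level n1, and so do s1 x and s1 y; this contradicts s1 x being in
   C_n1 while s1 y is not. *)

Section GroupLemmas.
Context {G : group}.
Implicit Types a b s : G.

Lemma gmulK a b : gmul (ginv a) (gmul a b) = b.
Proof. rewrite gmulA, gmulVl, gmul1l. reflexivity. Qed.

Lemma gmul_cancel_l a b c : gmul a b = gmul a c -> b = c.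
Proof. intro E. rewrite <- (gmulK a b), <- (gmulK a c), E. reflexivity. Qed.

Lemma gmul1r a : gmul a gone = a.
Proof. apply (gmul_cancel_l (ginv a)). rewrite gmulK, gmulVl. reflexivity. Qed.

Lemma gmulVr a : gmul a (ginv a) = gone.
Proof. apply (gmul_cancel_l (ginv a)). rewrite gmulK, gmul1r. reflexivity. Qed.

Lemma gmulKV a b : gmul a (gmul (ginv a) b) = b.
Proof. rewrite gmulA, gmulVr, gmul1l. reflexivity. Qed.

Lemma ginvM a b : ginv (gmul a b) = gmul (ginv b) (ginv a).
Proof.
  apply (gmul_cancel_l (gmul a b)).
  rewrite gmulVr, <- gmulA, (gmulA _ b), gmulVr, gmul1l, gmulVr. reflexivity.
Qed.

Lemma gmul_ginv_translate s a b :
  gmul (ginv (gmul s a)) (gmul s b) = gmul (ginv a) b.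
Proof. rewrite ginvM, <- gmulA, gmulK. reflexivity. Qed.

End GroupLemmas.

Section Cosets.
Context {G : group} {H : G -> Prop}.
Hypothesis H_subgroup : is_subgroup H.

Lemma lcoset_eq a b : H (gmul (ginv a) b) -> lcoset H a = lcoset H b.
Proof.
  destruct H_subgroup as [_ [HM HI]]. intro Hab.
  extensionality h. apply propositional_extensionality. unfold lcoset. split; intro Hh.
  - rewrite <- (gmul_ginv_translate (ginv a) b h). auto.
  - rewrite <- (gmulKV b h), gmulA. auto.
Qed.

Lemma lcoset_in_subgroup a : H a -> lcoset H a = H.
Proof.
  destruct H_subgroup as [_ [HM HI]]. intro Ha.
  extensionality h. apply propositional_extensionality. unfold lcoset. split; intro Hh.
  - rewrite <- (gmulKV a h). auto.
  - auto.
Qed.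

End Cosets.

Lemma translate_component_inj (G : group) (s : G) (c d : nat -> G -> Prop) n :
  translate s c n = translate s d n -> c n = d n.
Proof.
  intro E. extensionality h.
  pose proof (f_equal (fun P => P (gmul s h)) E) as Eh. unfold translate in Eh.
  rewrite !gmulK in Eh. exact Eh.
Qed.

Section Tower.
Variables (G : group) (Gam : nat -> G -> Prop).
Hypothesis Gam_subgroup : forall n, 1 <= n -> is_subgroup (Gam n).
Hypothesis Gam_succ_sub : forall n, 1 <= n -> forall g, Gam (S n) g -> Gam n g.

Lemma Gam_antitone n m g : 1 <= n <= m -> Gam m g -> Gam n g.
Proof.
  intros [Hn Hnm]. induction Hnm as [|m Hnm IH]; intro Hg; [exact Hg|].
  apply IH, Gam_succ_sub; [lia | exact Hg].
Qed.

Lemma inv_limit_antitone (c : inv_limit Gam) n m h :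
  1 <= n <= m -> proj1_sig c m h -> proj1_sig c n h.
Proof.
  intros [Hn Hnm]. induction Hnm as [|m Hnm IH]; intro Hh; [exact Hh|].
  apply IH, (proj2 (proj2_sig c m ltac:(lia))), Hh.
Qed.

Lemma inv_limit_lcoset (c : inv_limit Gam) n h :
  1 <= n -> proj1_sig c n h -> proj1_sig c n = lcoset (Gam n) h.
Proof.
  intros Hn Hh. destruct (proj1 (proj2_sig c n Hn)) as [g Hg].
  rewrite Hg in Hh |- *. apply lcoset_eq; auto.
Qed.

Variable gam : nat -> G.
Hypothesis gam_prev : forall m, 2 <= m -> Gam (m - 1) (gam m).

Lemma in_C_component_below (c : inv_limit Gam) s n m :
  1 <= n < m -> in_C Gam gam m (translate s (proj1_sig c)) ->
  translate s (proj1_sig c) n = Gam n.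
Proof.
  intros [Hn Hnm] HC.
  assert (Hcm : proj1_sig c m (gmul (ginv s) (gam m))).
  { change (translate s (proj1_sig c) m (gam m)). rewrite HC. unfold lcoset.
    rewrite gmulVl. apply Gam_subgroup. lia. }
  assert (Hcn : proj1_sig c n = lcoset (Gam n) (gmul (ginv s) (gam m))).
  { apply inv_limit_lcoset; [exact Hn|]. apply (inv_limit_antitone c n m); [lia | exact Hcm]. }
  assert (Hgam : Gam n (gam m)).
  { apply (Gam_antitone n (m - 1)); [lia|]. apply gam_prev. lia. }
  rewrite <- (lcoset_in_subgroup (Gam_subgroup n Hn) (gam m) Hgam).
  extensionality h. unfold translate. rewrite Hcn. unfold lcoset.
  rewrite gmul_ginv_translate. reflexivity.
Qed.

End Tower.

Theorem lemma4p5 (G : group) (Gam : nat -> G -> Prop) (gam : nat -> G)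
  (Hcount : countably_infinite G)
  (Hsub : forall n, 1 <= n -> is_subgroup (Gam n))
  (Hnorm : forall n, 1 <= n -> is_normal (Gam n))
  (Hfin : forall n, 1 <= n -> finite_index (Gam n))
  (Hdec : forall n, 1 <= n -> strict_subset (Gam (S n)) (Gam n))
  (Htriv : forall g, (forall n, 1 <= n -> Gam n g) -> g = gone)
  (Hgam : forall n, 2 <= n -> Gam (n - 1) (gam n) /\ ~ Gam n (gam n))
  (s1 s2 : G) (x y : inv_limit Gam) (n1 n2 m2 : nat)
  (Hn1 : 2 <= n1) (Hn2 : 2 <= n2) (Hm2 : 2 <= m2) (Hlt : n1 < n2)
  (Hx1 : in_C Gam gam n1 (translate s1 (proj1_sig x)))
  (Hx2 : in_C Gam gam n2 (translate s2 (proj1_sig x)))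
  (Hy1 : ~ in_C Gam gam n1 (translate s1 (proj1_sig y)))
  (Hy2 : in_C Gam gam m2 (translate s2 (proj1_sig y))) :
  m2 <= n1.
Proof.
  destruct (Nat.le_gt_cases m2 n1) as [| Hm]; [assumption | exfalso].
  pose proof (fun n Hn => proj1 (Hdec n Hn)) as Hsucc.
  pose proof (fun m Hm => proj1 (Hgam m Hm)) as Hprev.
  assert (Ex : translate s2 (proj1_sig x) n1 = Gam n1).
  { apply (in_C_component_below G Gam Hsub Hsucc gam Hprev x s2 n1 n2); [lia | exact Hx2]. }
  assert (Ey : translate s2 (proj1_sig y) n1 = Gam n1).
  { apply (in_C_component_below G Gam Hsub Hsucc gam Hprev y s2 n1 m2); [lia | exact Hy2]. }
  assert (Exy : proj1_sig x n1 = proj1_sig y n1).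
  { apply (translate_component_inj G s2). congruence. }
  apply Hy1. unfold in_C, translate in *. rewrite <- Exy. exact Hx1.
Qed.
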